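(* Let $f(x)=\frac1n\sum_{i=1}^n f_i(x)$ with $f_i:\mathbb{R}^d\to\mathbb{R}$, where each $f_i$ is $L$-smooth and $\mu$-strongly convex, and let $x^*$ be the minimizer of $f$. Run No Full Grad SARAH (described in the context) with stepsize $\gamma\le\frac1{20L(n+1)}$. Then, to reach $\varepsilon$-accuracy, where $\varepsilon=f(x_{S+1}^0)-f(x^* )$, the method needs $\mathcal{O}\left(\frac{nL}{\mu}\log\frac1\varepsilon\right)$ iterations and oracle calls.
   Context: No Full Grad SARAH: input $x_0^0\in\mathbb{R}^d$, $v_0=0$, stepsize $\gamma>0$. For epochs $s=0,1,\dots,S$: choose a permutation $\pi_s^1,\dots,\pi_s^n$ of $\{1,\dots,n\}$ (by any shuffling rule); set $\tilde v_s^1=0$, $v_s^0=v_s$, $x_s^1=x_s^0-\gamma v_s^0$; for $t=1,\dots,n$ set $\tilde v_s^{t+1}=\frac{t-1}{t}\tilde v_s^t+\frac1t\nabla f_{\pi_s^t}(x_s^t)$, $v_s^t=\frac1n\big(\nabla f_{\pi_s^t}(x_s^t)-\nabla f_{\pi_s^t}(x_s^{t-1})\big)+v_s^{t-1}$, $x_s^{t+1}=x_s^t-\gamma v_s^t$; then set $x_{s+1}^0=x_s^{n+1}$ and $v_{s+1}=\tilde v_s^{n+1}$. A function is $\mu$-strongly convex if $f_i(y)\ge f_i(x)+\langle\nabla f_i(x),y-x\rangle+\frac\mu2\|y-x\|^2$. An oracle call is one evaluation of a single $\nabla f_i$; an iteration is one inner step. The $\mathcal{O}(\cdot)$ hides absolute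 constants and the dependence on the initial gap. *)

From HB Require Import structures.
From mathcomp Require Import all_boot all_order all_algebra all_fingroup.
From mathcomp Require Import all_classical all_reals all_analysis.
Set Implicit Arguments. Unset Strict Implicit. Unset Printing Implicit Defensive.
Import Order.TTheory GRing.Theory Num.Theory.
Import numFieldNormedType.Exports.
Local Open Scope ring_scope.

Section NFGSarah.
Variables (R : realType) (d n : nat).
Notation vec := 'rV[R]_d.

Definition dotv (u v : vec) : R := \sum_(j < d) u 0 j * v 0 j.
Definition enorm (u : vec) : R := Num.sqrt (dotv u u).

Definition favg (f : 'I_n -> vec -> R) (x : vec) : R :=
  n%:R^-1 * \sum_(i < n) f i x.

(* Inner-loop state at step t: (x_s^t, x_s^{t-1}, v_s^{t-1}, tilde v_s^t). *)
Definition inner_state := (vec * vec * vec * vec)%type.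

(* One inner step t = j+1 (j : 'I_n is the 0-based position), with
   component index p = pi_s^t and gradient oracle g. *)
Definition inner_step (gamma : R) (g : 'I_n -> vec -> vec) (p : 'I_n)
    (t : nat) (st : inner_state) : inner_state :=
  let: (x, xp, vp, tv) := st in
  let gt := g p x in
  let tv' := ((t%:R - 1) / t%:R) *: tv + t%:R^-1 *: gt in
  let v := n%:R^-1 *: (gt - g p xp) + vp in
  (x - gamma *: v, x, v, tv').

(* One epoch s of No Full Grad SARAH: input (x_s^0, v_s), permutation pi_s;
   output (x_{s+1}^0, v_{s+1}) = (x_s^{n+1}, tilde v_s^{n+1}). *)
Definition epoch (gamma : R) (g : 'I_n -> vec -> vec) (pi : {perm 'I_n})
    (xv : vec * vec) : vec * vec :=
  let: (x0, v) := xv in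
  let init : inner_state := (x0 - gamma *: v, x0, v, 0) in
  let fin := foldl (fun st (j : 'I_n) => inner_step gamma g (pi j) j.+1 st)
                   init (enum 'I_n) in
  let: (x, _, _, tv) := fin in (x, tv).

Fixpoint nfg_sarah (gamma : R) (g : 'I_n -> vec -> vec)
    (pi : nat -> {perm 'I_n}) (x0 : vec) (s : nat) : vec * vec :=
  match s with
  | 0 => (x0, 0)
  | s'.+1 => epoch gamma g (pi s') (nfg_sarah gamma g pi x0 s')
  end.

(* Number of inner iterations and of oracle calls (evaluations of a single
   grad f_i) performed by epochs 0..S: each inner step evaluates
   grad f_{pi_s^t}(x_s^t) and grad f_{pi_s^t}(x_s^{t-1}). *)
Definition iterations (S : nat) : nat := S.+1 * n.
Definition oracle_calls (S : nat) : nat := 2 * (S.+1 * n).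

Definition is_gradient (f : 'I_n -> vec -> R) (g : 'I_n -> vec -> vec) :=
  forall i x, differentiable (f i) x /\ forall v, 'd (f i) x v = dotv (g i x) v.

Definition L_smooth (g : 'I_n -> vec -> vec) (L : R) :=
  forall i x y, enorm (g i x - g i y) <= L * enorm (x - y).

Definition strongly_convex (f : 'I_n -> vec -> R) (g : 'I_n -> vec -> vec)
    (mu : R) :=
  forall i x y, f i x + dotv (g i x) (y - x) + mu / 2 * enorm (y - x) ^+ 2
                <= f i y.

End NFGSarah.

(* One epoch of No Full Grad SARAH is, up to a controlled error, a single
   gradient step of length gamma (n + 1) = 1 / (20 L) from x_s^0 = X.  Write
   a = |grad f(X)|, e = |v_s - grad f(X)| and rho = (40 e + a) / 39.  Along the
   epoch the recursive estimate v stays within rho of grad f(X), so the inner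
   points stay within gamma t rho of X - gamma t grad f(X); and the running
   mean of the visited gradients, which becomes v_{s+1}, is within
   (a + rho) / 10 of grad f(x_{s+1}^0).  For the Lyapunov function
   Phi(x, v) = f(x) - f(xstar) + |v - grad f(x)|^2 / (5 L), the quadratic upper
   bound given by L-smoothness, the Polyak-Lojasiewicz inequality
   2 mu (f(x) - f(xstar)) <= |grad f(x)|^2 and an elementary inequality in a and e
   give Phi_{s+1} <= (1 - mu / (20 L)) Phi_s.  Hence the gap after S + 1 epochs
   is at most exp(-(S + 1) mu / (20 L)) Phi_0, which is below eps as soon as
   the 2 (S + 1) n oracle calls exceed 40 (n L / mu) ln(Phi_0 / eps). *)

From HB Require Import structures.
From mathcomp Require Import all_boot all_order all_algebra all_fingroup.
From mathcomp Require Import all_classical all_reals all_analysis.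
From mathcomp Require Import ring lra.
Import Order.TTheory GRing.Theory Num.Theory.
Set Implicit Arguments. Unset Strict Implicit. Unset Printing Implicit Defensive.
Local Open Scope ring_scope.

Section Euclidean.
Variables (R : realType) (d : nat).
Notation vec := 'rV[R]_d.
Implicit Types u v w : vec.

Lemma dotvC u v : dotv u v = dotv v u.
Proof. by apply: eq_bigr => j _; rewrite mulrC. Qed.

Lemma dotvDl u w v : dotv (u + w) v = dotv u v + dotv w v.
Proof. by rewrite /dotv -big_split; apply: eq_bigr => j _; rewrite mxE mulrDl. Qed.

Lemma dotvZl c u v : dotv (c *: u) v = c * dotv u v.
Proof. by rewrite /dotv mulr_sumr; apply: eq_bigr => j _; rewrite mxE mulrA. Qed.

Lemma dotvNl u v : dotv (- u) v = - dotv u v.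
Proof. by rewrite -scaleN1r dotvZl mulN1r. Qed.

Lemma dotvBl u w v : dotv (u - w) v = dotv u v - dotv w v.
Proof. by rewrite dotvDl dotvNl. Qed.

Lemma dotvDr u w v : dotv v (u + w) = dotv v u + dotv v w.
Proof. by rewrite dotvC dotvDl !(dotvC v). Qed.

Lemma dotvZr c u v : dotv v (c *: u) = c * dotv v u.
Proof. by rewrite dotvC dotvZl dotvC. Qed.

Lemma dotvBr u w v : dotv v (u - w) = dotv v u - dotv v w.
Proof. by rewrite dotvC dotvBl !(dotvC v). Qed.

Lemma dotv_suml (I : Type) (r : seq I) (P : pred I) (F : I -> vec) v :
  dotv (\sum_(i <- r | P i) F i) v = \sum_(i <- r | P i) dotv (F i) v.
Proof.
apply: (big_ind2 (fun a b => dotv a v = b)) => [|x1 x2 y1 y2 <- <-|//].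
  by rewrite /dotv big1 // => j _; rewrite mxE mul0r.
exact: dotvDl.
Qed.

Lemma dotvv_ge0 u : 0 <= dotv u u.
Proof. by apply: sumr_ge0 => j _; rewrite -expr2 sqr_ge0. Qed.

Lemma enorm_ge0 u : 0 <= enorm u.
Proof. exact: sqrtr_ge0. Qed.

Lemma enorm_sqr u : enorm u ^+ 2 = dotv u u.
Proof. by rewrite /enorm sqr_sqrtr // dotvv_ge0. Qed.

Lemma enorm_eq0_dotv u : enorm u = 0 -> forall v, dotv u v = 0.
Proof.
move=> u0 v; have uu0 : dotv u u = 0 by rewrite -enorm_sqr u0 expr0n.
have uj0 j : u 0 j = 0.
  have sq_ge0 i : 0 <= u 0 i * u 0 i by rewrite -expr2 sqr_ge0.
  have /eqP := @psumr_eq0P _ _ xpredT _ (fun i _ => sq_ge0 i) uu0 j isT.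
  by rewrite mulf_eq0 orbb => /eqP.
by rewrite /dotv big1 // => j _; rewrite uj0 mul0r.
Qed.

Lemma cauchy_schwarz u v : dotv u v <= enorm u * enorm v.
Proof.
have [u0|nu0] := eqVneq (enorm u) 0; first by rewrite enorm_eq0_dotv // u0 mul0r.
have [v0|nv0] := eqVneq (enorm v) 0.
  by rewrite dotvC enorm_eq0_dotv // v0 mulr0.
have ABgt0 : 0 < enorm u * enorm v.
  by rewrite mulr_gt0 // lt_neqAle eq_sym ?nu0 ?nv0 enorm_ge0.
have := dotvv_ge0 (enorm v *: u - enorm u *: v).
rewrite !dotvBl !dotvBr !dotvZl !dotvZr -!enorm_sqr (dotvC v u).
set A := enorm u in ABgt0 *; set B := enorm v in ABgt0 *; nra.
Qed.

Lemma enormZ c u : enorm (c *: u) = `|c| * enorm u.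
Proof.
rewrite /enorm dotvZl dotvZr mulrA -expr2 sqrtrM ?sqr_ge0 //.
by rewrite sqrtr_sqr.
Qed.

Lemma enormN u : enorm (- u) = enorm u.
Proof. by rewrite -scaleN1r enormZ normrN normr1 mul1r. Qed.

Lemma enorm0 : enorm (0 : vec) = 0.
Proof. by rewrite -(scale0r (0 : vec)) enormZ normr0 mul0r. Qed.

Lemma enormD u v : enorm (u + v) <= enorm u + enorm v.
Proof.
rewrite {1}/enorm -(ger0_norm (addr_ge0 (enorm_ge0 u) (enorm_ge0 v))) -sqrtr_sqr.
rewrite ler_sqrt ?sqr_ge0 // dotvDl !dotvDr -!enorm_sqr (dotvC v u).
have := cauchy_schwarz u v; nra.
Qed.

Lemma enormB u v : enorm (u - v) <= enorm u + enorm v.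
Proof. by rewrite -(enormN v) enormD. Qed.

Lemma enorm_sum (I : Type) (r : seq I) (P : pred I) (F : I -> vec) :
  enorm (\sum_(i <- r | P i) F i) <= \sum_(i <- r | P i) enorm (F i).
Proof.
apply: (big_ind2 (fun a b => enorm a <= b)) => [|x1 x2 y1 y2 h1 h2|//].
  by rewrite enorm0.
exact: le_trans (enormD _ _) (lerD h1 h2).
Qed.

End Euclidean.

Section Average.
Variables (R : realType) (d n : nat).
Notation vec := 'rV[R]_d.
Variables (f : 'I_n -> vec -> R) (g : 'I_n -> vec -> vec) (L mu : R).
Hypothesis n_gt0 : (0 < n)%N.

Definition gavg (x : vec) : vec := n%:R^-1 *: \sum_(i < n) g i x.

Lemma mean_le (F1 F2 : 'I_n -> R) : (forall i, F1 i <= F2 i) ->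
  n%:R^-1 * \sum_(i < n) F1 i <= n%:R^-1 * \sum_(i < n) F2 i.
Proof. by move=> F12; rewrite ler_wpM2l ?invr_ge0 ?ler0n // ler_sum. Qed.

Lemma mean_const (c : R) : n%:R^-1 * \sum_(i < n) c = c.
Proof.
rewrite sumr_const card_ord -[c *+ n]mulr_natl mulrA mulVf ?mul1r //.
by rewrite pnatr_eq0 -lt0n.
Qed.

Lemma favg_affine x w (c : R) :
  favg f x + dotv (gavg x) w + c =
  n%:R^-1 * \sum_(i < n) (f i x + dotv (g i x) w + c).
Proof. by rewrite /favg /gavg dotvZl dotv_suml !big_split /= !mulrDr mean_const. Qed.

Lemma favg_lower x y : strongly_convex f g mu ->
  favg f x + dotv (gavg x) (y - x) + mu / 2 * enorm (y - x) ^+ 2 <= favg f y.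
Proof. by move=> sc; rewrite favg_affine; apply: mean_le. Qed.

Lemma subgradient_lipschitz_upper i x y :
  0 <= mu -> strongly_convex f g mu -> L_smooth g L ->
  f i y <= f i x + dotv (g i x) (y - x) + L * enorm (y - x) ^+ 2.
Proof.
move=> mu_ge0 sc lip.
have := sc i y x; rewrite -(opprB y x) -scaleN1r dotvZr mulN1r.
have : 0 <= mu / 2 * enorm (y - x) ^+ 2 by rewrite mulr_ge0 ?sqr_ge0 ?divr_ge0.
have : dotv (g i y - g i x) (y - x) <= L * enorm (y - x) ^+ 2.
  apply: le_trans (cauchy_schwarz _ _) _.
  by rewrite expr2 mulrA ler_wpM2r ?enorm_ge0 ?lip.
rewrite dotvBl scaleN1r enormN; lra.
Qed.

Lemma favg_upper x y : 0 <= mu -> strongly_convex f g mu -> L_smooth g L ->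
  favg f y <= favg f x + dotv (gavg x) (y - x) + L * enorm (y - x) ^+ 2.
Proof.
move=> mu_ge0 sc lip; rewrite favg_affine /favg.
by apply: mean_le => i; apply: subgradient_lipschitz_upper.
Qed.

Lemma gavg_lipschitz x y : L_smooth g L -> enorm (gavg x - gavg y) <= L * enorm (x - y).
Proof.
move=> lip; rewrite /gavg -scalerBr -sumrB enormZ ger0_norm ?invr_ge0 ?ler0n //.
rewrite -[X in _ <= X]mean_const ler_wpM2l ?invr_ge0 ?ler0n //.
by apply: le_trans (enorm_sum _ _ _) _; apply: ler_sum => i _; apply: lip.
Qed.

Lemma favg_PL x y : 0 <= mu -> strongly_convex f g mu ->
  2 * mu * (favg f x - favg f y) <= enorm (gavg x) ^+ 2.
Proof.
move=> mu_ge0 sc; have := favg_lower x y sc.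
have := cauchy_schwarz (- gavg x) (y - x); rewrite dotvNl enormN.
have := enorm_ge0 (y - x); have := sqr_ge0 (enorm (gavg x) - mu * enorm (y - x)).
set a := enorm (gavg x); set r := enorm (y - x); nra.
Qed.

Lemma mu_le_2L : (0 < d)%N -> 0 <= mu -> strongly_convex f g mu -> L_smooth g L ->
  mu <= 2 * L.
Proof.
move=> d_gt0 mu_ge0 sc lip; set y : vec := const_mx 1.
have := favg_lower 0 y sc; have := favg_upper 0 y mu_ge0 sc lip.
have : 0 < enorm (y - 0) ^+ 2.
  rewrite subr0 enorm_sqr /dotv; under eq_bigr do rewrite !mxE mulr1.
  by rewrite sumr_const card_ord -[1 *+ d]mulr_natl mulr1 ltr0n.
set r := enorm (y - 0) ^+ 2 => r_gt0 upper lower.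
have : (mu / 2 - L) * r <= 0 by rewrite mulrBl; lra.
rewrite pmulr_lle0 //; lra.
Qed.

Lemma sum_perm_gavg (pi : {perm 'I_n}) x :
  \sum_(j < n) g (pi j) x = n%:R *: gavg x.
Proof.
rewrite /gavg scalerA divff ?pnatr_eq0 -?lt0n // scale1r.
by rewrite [RHS](reindex_inj (@perm_inj _ pi)).
Qed.

End Average.

Lemma foldl_enum_ord_ind (T : Type) (n : nat) (P : nat -> T -> Prop)
    (F : T -> 'I_n -> T) (x : T) :
  P 0%N x -> (forall (j : 'I_n) y, P j y -> P j.+1 (F y j)) ->
  P n (foldl F x (enum 'I_n)).
Proof.
move=> P0 PS.
suff PL l m y : map val l = iota m (size l) -> P m y -> P (m + size l)%N (foldl F y l).
  by have := PL (enum 'I_n) 0%N x; rewrite val_enum_ord size_enum_ord; apply.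
elim: l m y => [|j l IH] m y /=; first by rewrite addn0.
by case=> <- vl Py; rewrite -addSnnS; apply: IH vl (PS j y Py).
Qed.

Lemma big_ord_ltS (V : nmodType) (n : nat) (F : 'I_n -> V) (j : 'I_n) :
  \sum_(i < n | (i < j.+1)%N) F i = \sum_(i < n | (i < j)%N) F i + F j.
Proof.
rewrite (bigD1 j) //= addrC; congr (_ + _); apply: eq_bigl => i.
by rewrite ltnS ltn_neqAle andbC.
Qed.

Lemma scale_running_mean (R : numFieldType) (V : lmodType R) (m : nat) (u w : V) :
  m.+1%:R *: (((m.+1%:R - 1) / m.+1%:R) *: u + m.+1%:R^-1 *: w) = m%:R *: u + w.
Proof.
have m1_neq0 : m.+1%:R != 0 :> R by rewrite pnatr_eq0.
by rewrite scalerDr !scalerA mulrC divfK // divff // scale1r -natr1 addrK.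
Qed.

Section Epoch.
Variables (R : realType) (d n : nat).
Notation vec := 'rV[R]_d.
Variables (g : 'I_n -> vec -> vec) (L gam : R) (pi : {perm 'I_n}) (X V : vec).
Hypotheses (n_gt0 : (0 < n)%N) (L_gt0 : 0 < L) (lip : L_smooth g L)
  (gam_def : gam = (20 * L * (n%:R + 1))^-1).

Let G := gavg g X.
Let a := enorm G.
Let e := enorm (V - G).
(* [rho] solves rho = e + (a + rho) / 40: the error of v starts at e, and each
   of the n inner steps adds at most L gam |v| / n <= L gam (a + rho) / n,
   where L gam <= 1 / 40. *)
Let rho := (40 * e + a) / 39.
Let K := L * gam * (a + rho).

Let n_ge1 : 1 <= n%:R :> R. Proof. by rewrite ler1n. Qed.

Lemma gam_gt0 : 0 < gam.
Proof. by have := n_ge1; rewrite gam_def invr_gt0 !mulr_gt0 //; lra. Qed.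

Lemma gam_n1 : gam * (n%:R + 1) = (20 * L)^-1.
Proof.
have n1_gt0 : 0 < n%:R + 1 :> R by have := n_ge1; lra.
by rewrite gam_def invfM -mulrA mulVf ?mulr1 ?lt0r_neq0.
Qed.

Lemma Lgam_n1 : L * gam * (n%:R + 1) = 1 / 20.
Proof. by rewrite -mulrA gam_n1; field; rewrite lt0r_neq0. Qed.

Let a_ge0 : 0 <= a. Proof. exact: enorm_ge0. Qed.
Let e_ge0 : 0 <= e. Proof. exact: enorm_ge0. Qed.

Lemma rho_ge0 : 0 <= rho.
Proof. by have := a_ge0; have := e_ge0; rewrite /rho; lra. Qed.

Lemma K_ge0 : 0 <= K.
Proof.
apply: mulr_ge0; first by rewrite mulr_ge0 // ltW // gam_gt0.
by rewrite addr_ge0 // rho_ge0.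
Qed.

Lemma e_drift_le_rho : e + K <= rho.
Proof.
have : L * gam * 2 <= 1 / 20.
  by have := n_ge1; rewrite -Lgam_n1 ler_pM2l ?mulr_gt0 ?gam_gt0 //; lra.
have := a_ge0; have := e_ge0; have := K_ge0; rewrite /K /rho; nra.
Qed.

(* After m inner steps, st = (x_s^{m+1}, x_s^m, v_s^m, tilde v_s^{m+1}). *)
Definition inner_inv (m : nat) (st : inner_state R d) : Prop :=
  let: (x, xp, vp, tv) := st in
  [/\ x = xp - gam *: vp,
      enorm (vp - G) <= e + m%:R / n%:R * K,
      enorm (x - X + (gam * m.+1%:R) *: G) <= gam * m.+1%:R * rho &
      enorm (m%:R *: tv - \sum_(i < n | (i < m)%N) g (pi i) X)
        <= m%:R * (L * gam * n%:R * (a + rho))].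

Lemma inner_inv0 : inner_inv 0 (X - gam *: V, X, V, 0).
Proof.
split=> //; first by rewrite mul0r mul0r addr0.
  have -> : X - gam *: V - X + (gam * 1) *: G = - (gam *: (V - G)).
    by apply/rowP => k; rewrite !mxE; ring.
  rewrite enormN enormZ gtr0_norm ?gam_gt0 // mulr1 ler_wpM2l ?(ltW gam_gt0) // -/e.
  by have := e_drift_le_rho; have := K_ge0; lra.
by rewrite big_pred0 // scale0r subr0 enorm0 mul0r.
Qed.

Lemma velocity_dev_le_rho m v : (m <= n)%N ->
  enorm (v - G) <= e + m%:R / n%:R * K -> enorm (v - G) <= rho.
Proof.
move=> m_le_n v_dev; apply: le_trans v_dev _; apply: le_trans e_drift_le_rho.
by rewrite lerD2l ler_piMl ?K_ge0 // ler_pdivrMr ?ltr0n // mul1r ler_nat.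
Qed.

Lemma velocity_step m p x xp vp : (m < n)%N -> x = xp - gam *: vp ->
  enorm (vp - G) <= e + m%:R / n%:R * K ->
  enorm (n%:R^-1 *: (g p x - g p xp) + vp - G) <= e + m.+1%:R / n%:R * K.
Proof.
move=> m_lt_n x_def vp_dev.
have vp_rho := velocity_dev_le_rho (ltnW m_lt_n) vp_dev.
have vp_norm : enorm vp <= a + rho.
  by rewrite -[vp](subrK G) addrC; apply: le_trans (enormD _ _) _; rewrite lerD2l.
have incr : enorm (n%:R^-1 *: (g p x - g p xp)) <= K / n%:R.
  rewrite enormZ ger0_norm ?invr_ge0 ?ler0n // mulrC ler_wpM2r ?invr_ge0 ?ler0n //.
  apply: le_trans (lip _ _ _) _.
  rewrite x_def addrAC subrr add0r enormN enormZ gtr0_norm ?gam_gt0 // mulrA.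
  by rewrite ler_wpM2l // mulr_ge0 ?ltW ?gam_gt0.
rewrite -addrA; apply: le_trans (enormD _ _) _.
by rewrite -natr1; lra.
Qed.

Lemma position_step (c : R) x v :
  enorm (x - X + (gam * c) *: G) <= gam * c * rho -> enorm (v - G) <= rho ->
  enorm (x - gam *: v - X + (gam * (c + 1)) *: G) <= gam * (c + 1) * rho.
Proof.
move=> x_dev v_dev.
have -> : x - gam *: v - X + (gam * (c + 1)) *: G =
    (x - X + (gam * c) *: G) - gam *: (v - G).
  by apply/rowP => k; rewrite !mxE; ring.
apply: le_trans (enormB _ _) _.
rewrite enormZ gtr0_norm ?gam_gt0 //.
by have := ler_wpM2l (ltW gam_gt0) v_dev; lra.
Qed.

Lemma position_dist (c : R) x : 0 <= c ->
  enorm (x - X + (gam * c) *: G) <= gam * c * rho ->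
  enorm (x - X) <= gam * c * (a + rho).
Proof.
move=> c_ge0 x_dev; rewrite -[x - X](addrK ((gam * c) *: G)).
apply: le_trans (enormB _ _) _.
rewrite enormZ ger0_norm ?mulr_ge0 ?(ltW gam_gt0) // -/a; lra.
Qed.

Lemma mean_step (j : 'I_n) x tv :
  enorm (x - X) <= gam * n%:R * (a + rho) ->
  enorm (j%:R *: tv - \sum_(i < n | (i < j)%N) g (pi i) X)
    <= j%:R * (L * gam * n%:R * (a + rho)) ->
  enorm (j.+1%:R *: (((j.+1%:R - 1) / j.+1%:R) *: tv + j.+1%:R^-1 *: g (pi j) x)
         - \sum_(i < n | (i < j.+1)%N) g (pi i) X)
    <= j.+1%:R * (L * gam * n%:R * (a + rho)).
Proof.
move=> x_dist tv_dev; rewrite scale_running_mean big_ord_ltS.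
set S := \sum_(i < n | _) _.
have -> : j%:R *: tv + g (pi j) x - (S + g (pi j) X) =
    (j%:R *: tv - S) + (g (pi j) x - g (pi j) X).
  by apply/rowP => k; rewrite !mxE; ring.
apply: le_trans (enormD _ _) _; apply: le_trans (lerD tv_dev (lip _ _ _)) _.
by have := ler_wpM2l (ltW L_gt0) x_dist; rewrite -natr1; lra.
Qed.

Lemma inner_inv_step (j : 'I_n) st :
  inner_inv j st -> inner_inv j.+1 (inner_step gam g (pi j) j.+1 st).
Proof.
case: st => [[[x xp] vp] tv] [x_def vp_dev x_dev tv_dev].
have v_dev := velocity_step (pi j) (ltn_ord j) x_def vp_dev.
have x_dist : enorm (x - X) <= gam * n%:R * (a + rho).
  apply: le_trans (position_dist _ x_dev) _; first exact: ler0n.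
  by rewrite ler_wpM2r ?addr_ge0 ?rho_ge0 // ler_wpM2l ?(ltW gam_gt0) // ler_nat.
split=> //; last exact: mean_step.
rewrite -[j.+2%:R]natr1.
exact: position_step x_dev (velocity_dev_le_rho (ltn_ord j) v_dev).
Qed.

Lemma epoch_bounds X' V' : epoch gam g pi (X, V) = (X', V') ->
  enorm (X' - X + (20 * L)^-1 *: G) <= (20 * L)^-1 * rho /\
  enorm (V' - gavg g X') <= (a + rho) / 10.
Proof.
have := @foldl_enum_ord_ind _ n inner_inv
  (fun st j => inner_step gam g (pi j) j.+1 st) _ inner_inv0 inner_inv_step.
rewrite /epoch; case: foldl => [[[x xp] vp] tv] [_ _ x_dev tv_dev] [<- <-].
rewrite -natr1 in x_dev; split; first by rewrite -gam_n1.
have x_dist := position_dist (addr_ge0 (ler0n _ n) ler01) x_dev.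
have tv_dist : enorm (tv - G) <= L * gam * n%:R * (a + rho).
  have sum_all : \sum_(i < n | (i < n)%N) g (pi i) X = n%:R *: G.
    by rewrite -(sum_perm_gavg _ n_gt0 pi); apply: eq_bigl => i; rewrite ltn_ord.
  rewrite sum_all -scalerBr enormZ ger0_norm ?ler0n // in tv_dev.
  by move: tv_dev; rewrite ler_pM2l ?ltr0n.
have G_dist : enorm (G - gavg g x) <= L * (gam * (n%:R + 1) * (a + rho)).
  apply: le_trans (gavg_lipschitz _ _ _ lip) _ => //.
  by rewrite -enormN opprB ler_wpM2l ?(ltW L_gt0).
rewrite -(subrK G tv) -addrA; apply: le_trans (enormD _ _) _.
have drift : L * gam * (n%:R + 1) * (a + rho) = (a + rho) / 20.
  by rewrite Lgam_n1; lra.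
by have := K_ge0; rewrite /K; lra.
Qed.

End Epoch.

(* The estimate that closes the one-epoch Lyapunov inequality. *)
Lemma radius_quadratic_le (R : realFieldType) (a e : R) : 0 <= a -> 0 <= e ->
  let rho := (40 * e + a) / 39 in
  a * rho - a ^+ 2 / 2 + 9 / 100 * (a + rho) ^+ 2 <= 18 / 5 * e ^+ 2.
Proof. move=> a_ge0 e_ge0 /=; nra. Qed.

Section Lyapunov.
Variables (R : realType) (d n : nat).
Notation vec := 'rV[R]_d.
Variables (f : 'I_n -> vec -> R) (g : 'I_n -> vec -> vec) (L mu gam : R) (xstar : vec).
Hypotheses (n_gt0 : (0 < n)%N) (L_gt0 : 0 < L) (mu_ge0 : 0 <= mu)
  (lip : L_smooth g L) (sc : strongly_convex f g mu).

Let D := (20 * L)^-1.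

Lemma favg_descent_le X X' (r : R) : 0 <= r ->
  enorm (X' - X + D *: gavg g X) <= D * r ->
  favg f X' <= favg f X + D * (enorm (gavg g X) * r - enorm (gavg g X) ^+ 2)
               + D * (enorm (gavg g X) + r) ^+ 2 / 20.
Proof.
move=> r_ge0 step_dev.
apply: le_trans (favg_upper n_gt0 X X' mu_ge0 sc lip) _.
have D_gt0 : 0 < D by rewrite invr_gt0 mulr_gt0.
set G := gavg g X in step_dev *; set a := enorm G.
set W := X' - X + D *: G in step_dev.
have -> : X' - X = W - D *: G by rewrite addrK.
have a_ge0 : 0 <= a := enorm_ge0 _.
have GW : dotv G W <= a * (D * r).
  by apply: le_trans (cauchy_schwarz _ _) _; rewrite ler_wpM2l.
have step_len : enorm (W - D *: G) <= D * (a + r).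
  apply: le_trans (enormB _ _) _.
  by rewrite enormZ gtr0_norm // -/a; lra.
have step_sqr : L * enorm (W - D *: G) ^+ 2 <= D * (a + r) ^+ 2 / 20.
  have : enorm (W - D *: G) ^+ 2 <= (D * (a + r)) ^+ 2.
    by apply: lerXn2r; rewrite ?nnegrE ?enorm_ge0 ?mulr_ge0 ?addr_ge0 ?(ltW D_gt0).
  have -> : D * (a + r) ^+ 2 / 20 = L * (D * (a + r)) ^+ 2.
    by rewrite /D; field; rewrite lt0r_neq0.
  exact/ler_wpM2l/ltW.
rewrite dotvBr dotvZr -enorm_sqr -/a; lra.
Qed.

Definition lyapunov (xv : vec * vec) : R :=
  favg f xv.1 - favg f xstar + (5 * L)^-1 * enorm (xv.2 - gavg g xv.1) ^+ 2.

Hypotheses (mu_le_2L : mu <= 2 * L) (gam_def : gam = (20 * L * (n%:R + 1))^-1).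

Lemma lyapunov_epoch pi X V :
  lyapunov (epoch gam g pi (X, V)) <= (1 - mu / (20 * L)) * lyapunov (X, V).
Proof.
case E: epoch => [X' V'].
have [step_dev var_le] := epoch_bounds n_gt0 L_gt0 lip gam_def E.
rewrite /lyapunov /=.
have D_gt0 : 0 < D by rewrite invr_gt0 mulr_gt0.
have -> : (5 * L)^-1 = 4 * D by rewrite /D; field; rewrite lt0r_neq0.
have -> : mu / (20 * L) = D * mu by rewrite mulrC.
set G := gavg g X in step_dev var_le *.
set a := enorm G in step_dev var_le *; set e := enorm (V - G) in step_dev var_le *.
have a_ge0 : 0 <= a := enorm_ge0 _; have e_ge0 : 0 <= e := enorm_ge0 _.
have := radius_quadratic_le a_ge0 e_ge0; set rho := (40 * e + a) / 39 => quad.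
have rho_ge0 : 0 <= rho by rewrite /rho; lra.
have descent := favg_descent_le rho_ge0 step_dev; rewrite -/G -/a in descent.
have var_sqr : enorm (V' - gavg g X') ^+ 2 <= (a + rho) ^+ 2 / 100.
  have -> : (a + rho) ^+ 2 / 100 = ((a + rho) / 10) ^+ 2 by field.
  by apply: lerXn2r; rewrite ?nnegrE ?enorm_ge0 //; lra.
have PL := favg_PL n_gt0 X xstar mu_ge0 sc; rewrite -/G -/a in PL.
have Dmu : D * mu <= 1 / 10.
  have D2L : D * (2 * L) = 1 / 10 by rewrite /D; field; rewrite lt0r_neq0.
  by rewrite -D2L ler_wpM2l // ltW.
have := ler_wpM2l (ltW D_gt0) PL; have := ler_wpM2l (ltW D_gt0) quad.
have := ler_wpM2l (ltW D_gt0) var_sqr.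
have := ler_wpM2r (mulr_ge0 (ltW D_gt0) (sqr_ge0 e)) Dmu.
lra.
Qed.

Lemma contraction_rate_le : mu / (20 * L) <= 1 / 10.
Proof.
rewrite ler_pdivrMr ?mulr_gt0 //.
by have -> : 1 / 10 * (20 * L) = 2 * L by field.
Qed.

Lemma lyapunov_iter pi x0 S :
  lyapunov (nfg_sarah gam g pi x0 S) <= (1 - mu / (20 * L)) ^+ S * lyapunov (x0, 0).
Proof.
elim: S => [|S IH] /=; first by rewrite expr0 mul1r.
case: nfg_sarah IH => X V IH; apply: le_trans (lyapunov_epoch _ _ _) _.
by rewrite exprS -mulrA ler_wpM2l //; have := contraction_rate_le; lra.
Qed.

Lemma gap_le_lyapunov xv : favg f xv.1 - favg f xstar <= lyapunov xv.
Proof. by rewrite lerDl mulr_ge0 ?sqr_ge0 ?invr_ge0 ?mulr_ge0 ?ltW. Qed.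

End Lyapunov.

Lemma geometric_le_of_ln (R : realType) (k P Delta eps : R) (s : nat) :
  0 <= k <= 1 -> P <= Delta -> 0 < Delta -> 0 < eps ->
  ln (Delta / eps) <= k * s%:R -> (1 - k) ^+ s * P <= eps.
Proof.
move=> /andP[k_ge0 k_le1] P_le Delta_gt0 eps_gt0 log_le.
have pow_ge0 : 0 <= (1 - k) ^+ s by rewrite exprn_ge0 // subr_ge0.
have pow_le : (1 - k) ^+ s <= expR (s%:R * - k).
  rewrite expRM_natl; apply: lerXn2r; rewrite ?nnegrE ?subr_ge0 ?expR_ge0 //.
  by have := expR_ge1Dx (- k); lra.
have exp_le : expR (s%:R * - k) <= eps / Delta.
  rewrite -[eps / Delta]lnK ?posrE ?divr_gt0 // ler_expR -invf_div.
  by rewrite lnV ?posrE ?divr_gt0 //; lra.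
apply: le_trans (ler_wpM2l pow_ge0 P_le) _.
rewrite -[eps](divfK (lt0r_neq0 Delta_gt0)) ler_wpM2r ?(ltW Delta_gt0) //.
exact: le_trans pow_le exp_le.
Qed.

Lemma ln_le_of_oracle_calls (R : realType) (n S : nat) (L mu l : R) :
  (0 < n)%N -> 0 < L -> 0 < mu ->
  40%:R * (n%:R * L / mu) * l <= (oracle_calls n S)%:R ->
  l <= mu / (20 * L) * S.+1%:R.
Proof.
move=> n_gt0 L_gt0 mu_gt0; rewrite /oracle_calls !natrM.
have n_neq0 : n%:R != 0 :> R by rewrite pnatr_eq0 -lt0n.
have c_gt0 : 0 < mu / (40 * n%:R * L) by rewrite divr_gt0 ?mulr_gt0 ?ltr0n.
move/(ler_wpM2r (ltW c_gt0)).
have -> : 40%:R * (n%:R * L / mu) * l * (mu / (40 * n%:R * L)) = l.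
  by field; rewrite n_neq0 !lt0r_neq0.
have -> // : 2%:R * (S.+1%:R * n%:R) * (mu / (40 * n%:R * L)) = mu / (20 * L) * S.+1%:R.
by field; rewrite n_neq0 lt0r_neq0.
Qed.

Theorem theorem4 :
  exists C : nat,
  forall (R : realType) (d n : nat) (f : 'I_n -> 'rV[R]_d -> R)
         (g : 'I_n -> 'rV[R]_d -> 'rV[R]_d) (L mu : R)
         (x0 xstar : 'rV[R]_d),
    (0 < n)%N -> 0 < L -> 0 < mu ->
    is_gradient f g -> L_smooth g L -> strongly_convex f g mu ->
    (forall x, favg f xstar <= favg f x) ->
    let gamma := (20 * L * (n%:R + 1))^-1 in
    exists Delta : R, 0 < Delta /\
    forall (eps : R) (pi : nat -> {perm 'I_n}) (S : nat), 0 < eps ->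
      let gap := favg f (nfg_sarah gamma g pi x0 S.+1).1 - favg f xstar in
      let bound := C%:R * (n%:R * L / mu) * ln (Delta / eps) in
      ((iterations n S)%:R >= bound -> gap <= eps) /\
      ((oracle_calls n S)%:R >= bound -> gap <= eps).
Proof.
exists 40%N => R d n f g L mu x0 xstar n_gt0 L_gt0 mu_gt0 _ lip sc xstar_min gam.
have [d0|d_gt0] := posnP d.
  exists 1; split=> // eps pi S eps_gt0 /=; subst d.
  by rewrite [_.1]thinmx0 [xstar]thinmx0 subrr; split=> _; apply: ltW.
set P := lyapunov f g L xstar (x0, 0).
have P_ge0 : 0 <= P.
  have := gap_le_lyapunov f g xstar L_gt0 (x0, 0); have := xstar_min x0.
  by rewrite /= -/P; lra.
exists (P + 1); split=> [|eps pi S eps_gt0 /=]; first by lra.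
have mu_le := mu_le_2L n_gt0 d_gt0 (ltW mu_gt0) sc lip.
have rate_ge0 : 0 <= mu / (20 * L) <= 1.
  have : 0 < mu / (20 * L) by rewrite divr_gt0 ?mulr_gt0.
  by have := contraction_rate_le L_gt0 mu_le; lra.
have gap_le : ln ((P + 1) / eps) <= mu / (20 * L) * S.+1%:R ->
    favg f (nfg_sarah gam g pi x0 S.+1).1 - favg f xstar <= eps.
  move=> log_le; apply: le_trans (gap_le_lyapunov f g xstar L_gt0 _) _.
  apply: le_trans (lyapunov_iter _ n_gt0 L_gt0 (ltW mu_gt0) lip sc mu_le erefl _ _ _) _.
  by apply: geometric_le_of_ln rate_ge0 _ _ eps_gt0 log_le; rewrite -/P; lra.
have calls_ge_iters : (iterations n S)%:R <= (oracle_calls n S)%:R :> R.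
  by rewrite ler_nat /oracle_calls leq_pmull.
split=> bound_le; apply/gap_le/(ln_le_of_oracle_calls n_gt0 L_gt0 mu_gt0) => //.
exact: le_trans bound_le calls_ge_iters.
Qed.
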